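(* Let $A \in \mathbb{R}^{d\times d}$ be invertible, $\bm{b}\in\mathbb{R}^d$, $\bm{x}^\ast=A^{-1}\bm{b}$, $\bm{x}_0\in\mathbb{R}^d$ with $\bm{x}_0\neq\bm{x}^\ast$, and $\Sigma_0$ symmetric positive-definite. Let $S_m\in\mathbb{R}^{d\times m}$ have linearly independent columns, $\Lambda_m=S_m^\top A\Sigma_0A^\top S_m$, $\bm{r}_0=\bm{b}-A\bm{x}_0$, and \[\bm{x}_m=\bm{x}_0+\Sigma_0A^\top S_m\Lambda_m^{-1}S_m^\top\bm{r}_0,\qquad \Sigma_m=\Sigma_0-\Sigma_0A^\top S_m\Lambda_m^{-1}S_m^\top A\Sigma_0.\] Then \[\frac{\|\bm{x}_m-\bm{x}^\ast\|_{\Sigma_0^{-1}}}{\|\bm{x}_0-\bm{x}^\ast\|_{\Sigma_0^{-1}}}\le\sqrt{\operatorname{tr}(\Sigma_m\Sigma_0^{-1})}.\]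
   Context: For a symmetric positive-definite matrix $M$, $\|\bm{v}\|_M=\sqrt{\bm{v}^\top M\bm{v}}$. $\bm{x}_m,\Sigma_m$ are the mean and covariance of the posterior obtained by conditioning the prior $\mathcal{N}(\bm{x}_0,\Sigma_0)$ on $S_m^\top A\bm{x}=S_m^\top\bm{b}$. *)

From HB Require Import structures.
From mathcomp Require Import all_boot all_order all_algebra.
Set Implicit Arguments. Unset Strict Implicit. Unset Printing Implicit Defensive.
Import Order.TTheory GRing.Theory Num.Theory.
Local Open Scope ring_scope.

Definition spd (R : realFieldType) (n : nat) (M : 'M[R]_n) : Prop :=
  M^T = M /\ forall v : 'cV[R]_n, v != 0 -> 0 < (v^T *m M *m v) ord0 ord0.

Definition mnorm (R : rcfType) (n : nat) (M : 'M[R]_n) (v : 'cV[R]_n) : R :=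
  Num.sqrt ((v^T *m M *m v) ord0 ord0).

From HB Require Import structures.
From mathcomp Require Import all_boot all_order all_algebra.
Import Order.TTheory GRing.Theory Num.Theory.
Local Open Scope ring_scope.
Set Implicit Arguments. Unset Strict Implicit.

(* With C := S^T A and K := C^T (C Sigma0 C^T)^-1 C, the error propagates as
   x_m - xstar = (1 - Sigma0 K) (x0 - xstar) and Sigma_m Sigma0^-1 = 1 - Sigma0 K.
   Since K Sigma0 K = K, the map 1 - Sigma0 K is a Sigma0^-1-orthogonal
   projection: it cannot increase the Sigma0^-1-norm, and it vanishes when C
   is invertible.  Its trace is d - m, so the right-hand side is at least 1
   unless m = d, in which case the left-hand side is 0. *)

Definition qform (R : pzRingType) n (M : 'M[R]_n) (v : 'cV[R]_n) : R :=
  (v^T *m M *m v) ord0 ord0.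

Lemma qformBl (R : pzRingType) n (M N : 'M[R]_n) (v : 'cV[R]_n) :
  qform (M - N) v = qform M v - qform N v.
Proof. by rewrite /qform mulmxBr mulmxBl mxE [X in _ + X]mxE. Qed.

Lemma qform_mulmx (R : comPzRingType) n (M P : 'M[R]_n) (v : 'cV[R]_n) :
  qform M (P *m v) = qform (P^T *m M *m P) v.
Proof. by rewrite /qform trmx_mul !mulmxA. Qed.

Section SymmetricPositiveDefinite.
Variables (R : realFieldType) (n : nat) (M : 'M[R]_n).
Hypothesis hM : spd M.

Lemma spd_qform_ge0 (v : 'cV[R]_n) : 0 <= qform M v.
Proof.
have [->|v0] := eqVneq v 0; first by rewrite /qform mulmx0 mxE.
exact/ltW/hM.2.
Qed.

Lemma spd_qform_eq0 (v : 'cV[R]_n) : qform M v = 0 -> v = 0.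
Proof. by move=> hv; apply/eqP/negPn/negP => /(hM.2 v); rewrite -/(qform M v) hv ltxx. Qed.

Lemma spd_unitmx : M \in unitmx.
Proof.
rewrite -row_free_unit; apply: inj_row_free => v hv.
by rewrite -(trmxK v) (@spd_qform_eq0 v^T) ?trmx0 // /qform trmxK hv mul0mx mxE.
Qed.

Lemma spd_invmx : spd (invmx M).
Proof.
split; first by rewrite trmx_inv hM.1.
move=> v v0; have hw : invmx M *m v != 0.
  by apply: contra v0 => /eqP hw; rewrite -(mulKVmx spd_unitmx v) hw mulmx0.
have := hM.2 _ hw; rewrite /qform trmx_mul trmx_inv hM.1.
by rewrite -!mulmxA (mulmxA M) (mulmxV spd_unitmx) mul1mx.
Qed.

Lemma spd_congr_unitmx k (C : 'M[R]_(k, n)) :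
  row_free C -> C *m M *m C^T \in unitmx.
Proof.
move=> hC; rewrite -row_free_unit; apply: inj_row_free => u hu.
apply: (row_free_inj hC); rewrite mul0mx -(trmxK (u *m C)).
rewrite (@spd_qform_eq0 (u *m C)^T) ?trmx0 //.
rewrite /qform trmxK.
have -> : u *m C *m M *m (u *m C)^T = u *m (C *m M *m C^T) *m u^T.
  by rewrite trmx_mul !mulmxA.
by rewrite hu !mul0mx mxE.
Qed.

End SymmetricPositiveDefinite.

Lemma mnormE (R : rcfType) n (M : 'M[R]_n) (v : 'cV[R]_n) :
  mnorm M v = Num.sqrt (qform M v).
Proof. by []. Qed.

Lemma mnorm_gt0 (R : rcfType) n (M : 'M[R]_n) (v : 'cV[R]_n) :
  spd M -> v != 0 -> 0 < mnorm M v.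
Proof. by move=> hM v0; rewrite sqrtr_gt0; apply: hM.2. Qed.

Definition gain (R : fieldType) n k (Sigma : 'M[R]_n) (C : 'M[R]_(k, n)) :=
  C^T *m invmx (C *m Sigma *m C^T) *m C.

Section Gain.
Variables (R : realFieldType) (n k : nat) (Sigma : 'M[R]_n) (C : 'M[R]_(k, n)).
Hypotheses (hSigma : spd Sigma) (hC : row_free C).
Local Notation K := (gain Sigma C).
Local Notation Lambda := (C *m Sigma *m C^T).

Let Lambda_unit : Lambda \in unitmx. Proof. exact: spd_congr_unitmx. Qed.

Lemma trmx_gain : K^T = K.
Proof.
have LT : Lambda^T = Lambda by rewrite !trmx_mul trmxK hSigma.1 mulmxA.
by rewrite /gain !trmx_mul trmxK trmx_inv LT mulmxA.
Qed.

Lemma gain_mul_trmx : K *m Sigma *m C^T = C^T.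
Proof.
have -> : K *m Sigma *m C^T = C^T *m (invmx Lambda *m Lambda) by rewrite /gain !mulmxA.
by rewrite mulVmx // mulmx1.
Qed.

Lemma gain_idem : K *m Sigma *m K = K.
Proof. by rewrite {2}/gain !mulmxA gain_mul_trmx. Qed.

Lemma qform_gain_ge0 (v : 'cV[R]_n) : 0 <= qform K v.
Proof.
rewrite -gain_idem -{1}trmx_gain -qform_mulmx.
exact: spd_qform_ge0.
Qed.

Lemma mxtrace_gain : \tr (Sigma *m K) = k%:R.
Proof.
have -> : Sigma *m K = Sigma *m C^T *m invmx Lambda *m C by rewrite /gain !mulmxA.
by rewrite mxtrace_mulC !mulmxA mulmxV // mxtrace1.
Qed.

Lemma gain_full : row_full C -> K = invmx Sigma.
Proof.
move=> /row_fullP [D hD].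
have KS1 : K *m Sigma = 1%:M.
  by rewrite -[LHS]mulmx1 -trmx1 -hD trmx_mul mulmxA gain_mul_trmx -trmx_mul hD trmx1.
by rewrite -[K]mulmx1 -(mulmxV (spd_unitmx hSigma)) mulmxA KS1 mul1mx.
Qed.

Lemma mxtrace_posterior : \tr (1%:M - Sigma *m K) = n%:R - k%:R.
Proof. by rewrite linearB /= mxtrace1 mxtrace_gain. Qed.

Lemma posterior_qform (v : 'cV[R]_n) :
  qform (invmx Sigma) ((1%:M - Sigma *m K) *m v)
  = qform (invmx Sigma) v - qform K v.
Proof.
have hU := spd_unitmx hSigma.
rewrite qform_mulmx -qformBl; congr qform.
have -> : (1%:M - Sigma *m K)^T = 1%:M - K *m Sigma.
  by rewrite linearB /= trmx1 trmx_mul trmx_gain hSigma.1.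
rewrite mulmxBl mul1mx -mulmxA mulmxV // mulmx1.
rewrite mulmxBr mulmx1 mulmxBl mulmxA mulVmx // mul1mx mulmxA gain_idem.
by rewrite subrr subr0.
Qed.

End Gain.

Lemma row_free_notfull_ltn (F : fieldType) k n (C : 'M[F]_(k, n)) :
  row_free C -> ~~ row_full C -> (k < n)%N.
Proof.
move=> /eqP hC; rewrite /row_full hC ltn_neqAle => ->.
by rewrite -[X in (X <= _)%N]hC rank_leq_col.
Qed.

Lemma posterior_mean_errorE (F : fieldType) d m (A Sigma : 'M[F]_d) (S : 'M[F]_(d, m))
    (b x0 : 'cV[F]_d) : A \in unitmx ->
  x0 + Sigma *m A^T *m S *m invmx (S^T *m A *m Sigma *m A^T *m S) *m S^T *m (b - A *m x0)
     - invmx A *m b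
  = (1%:M - Sigma *m gain Sigma (S^T *m A)) *m (x0 - invmx A *m b).
Proof.
move=> hA; rewrite -{1}(mulKVmx hA b) -mulmxBr -(opprB x0) !mulmxN mulmxBl mul1mx.
by rewrite addrAC /gain !trmx_mul trmxK !mulmxA.
Qed.

Lemma posterior_cov_mulVE (F : fieldType) d m (A Sigma : 'M[F]_d) (S : 'M[F]_(d, m)) :
  Sigma \in unitmx ->
  (Sigma - Sigma *m A^T *m S *m invmx (S^T *m A *m Sigma *m A^T *m S) *m S^T *m A *m Sigma)
     *m invmx Sigma
  = 1%:M - Sigma *m gain Sigma (S^T *m A).
Proof.
move=> hSigma; rewrite mulmxBl mulmxV // mulmxK //.
by rewrite /gain !trmx_mul trmxK !mulmxA.
Qed.

Lemma mnorm_posterior_le (R : rcfType) n k (Sigma : 'M[R]_n) (C : 'M[R]_(k, n))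
    (v : 'cV[R]_n) : spd Sigma -> row_free C ->
  mnorm (invmx Sigma) ((1%:M - Sigma *m gain Sigma C) *m v) <= mnorm (invmx Sigma) v.
Proof.
move=> hSigma hC; rewrite !mnormE posterior_qform //.
rewrite ler_sqrt ?gerBl ?qform_gain_ge0 //.
exact/spd_qform_ge0/spd_invmx.
Qed.

Lemma mnorm_posterior_full (R : rcfType) n k (Sigma : 'M[R]_n) (C : 'M[R]_(k, n))
    (v : 'cV[R]_n) : spd Sigma -> row_free C -> row_full C ->
  mnorm (invmx Sigma) ((1%:M - Sigma *m gain Sigma C) *m v) = 0.
Proof.
move=> hSigma hC hCf.
rewrite mnormE posterior_qform // gain_full //.
by rewrite subrr sqrtr0.
Qed.

Theorem proposition2 (R : rcfType) (d m : nat)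
  (A : 'M[R]_d) (b x0 : 'cV[R]_d) (Sigma0 : 'M[R]_d) (S : 'M[R]_(d, m)) :
  A \in unitmx ->
  x0 != invmx A *m b ->
  spd Sigma0 ->
  \rank S = m ->
  let xstar := invmx A *m b in
  let Lambda := S^T *m A *m Sigma0 *m A^T *m S in
  let r0 := b - A *m x0 in
  let xm := x0 + Sigma0 *m A^T *m S *m invmx Lambda *m S^T *m r0 in
  let Sigmam := Sigma0 - Sigma0 *m A^T *m S *m invmx Lambda *m S^T *m A *m Sigma0 in
  mnorm (invmx Sigma0) (xm - xstar) / mnorm (invmx Sigma0) (x0 - xstar)
    <= Num.sqrt (\tr (Sigmam *m invmx Sigma0)).
Proof.
move=> hA hx hS hr /=.
have hC : row_free (S^T *m A).
  by rewrite /row_free mxrankMfree ?row_free_unit // mxrank_tr hr.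
rewrite posterior_mean_errorE // posterior_cov_mulVE ?spd_unitmx //.
rewrite mxtrace_posterior //.
have [full | partial] := boolP (row_full (S^T *m A)).
  by rewrite mnorm_posterior_full // mul0r sqrtr_ge0.
have hmd := row_free_notfull_ltn hC partial.
rewrite ler_pdivrMr ?mnorm_gt0 ?subr_eq0 //; last exact: spd_invmx.
apply: le_trans (mnorm_posterior_le _ hS hC) _.
rewrite ler_peMl ?sqrtr_ge0 // -natrB ?(ltnW hmd) //.
by rewrite -[X in X <= _]sqrtr1 ler_sqrt ?ler0n // ler1n subn_gt0.
Qed.
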